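(* The category $\mathcal{C}(numOp)^{op}$ described in the context is not quasi-Gröbner.
   Context: Quasi-Gröbner categories. Let $\mathcal{C}$ be a small category and $c$ an object. An admissible order on the morphisms out of $c$ is a choice, for every object $c'$, of a well-order on $\mathrm{Hom}(c,c')$ such that $f\prec f'$ implies $g\circ f\prec g\circ f'$ for all $g$. On morphisms out of $c$ put the preorder $f\le g$ iff $g=h\circ f$ for some $h$; $|c/\mathcal{C}|$ is the associated poset. A poset is Noetherian if every sequence $x_1,x_2,\dots$ has $i<j$ with $x_i\le x_j$. $\mathcal{C}$ is Gröbner if for every object $c$: (G1) morphisms out of $c$ admit an admissible order, and (G2) $|c/\mathcal{C}|$ is Noetherian. A functor $\Phi:\mathcal{C}\to\mathcal{D}$ has property (F) if for every object $d$ of $\mathcal{D}$ there are finitely many objects $c_i$ of $\mathcal{C}$ and morphisms $f_i:d\to\Phi(c_i)$ such that every $f:d\to\Phi(c)$ factors as $\Phi(g)\circ f_i$ for some $i$ and $g:c_i\to c$. $\mathcal{D}$ is quasi-Gröbner if there is a Gröbner $\mathcal{C}$ and an essentially surjective functor $\mathcal{C}\to\mathcal{D}$ with property (F). Operadic graphs. A graph with half-edges is finite sets $V$, $H$, an involution $inv$ on $H$ and $t:H\to V$; fixed points of $inv$ are leaves, two-element orbits are edges. An operadic graph additionally has a total order on leaves (indexed $0,1,\dots$), for each vertex $v$ a total order on $t^{-1}(v)$, and a total order on $V$ (indexed $1,\dots,n$); considered up to isomorphism preserving all data. The category $\mathcal{C}(numOp)^{op}$: objects are connected operadic graphs with at least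 one vertex (loops, multiple edges and any number of leaves allowed). If $p$ has vertices $v_1<\dots<v_n$, a morphism $p\to q$ consists of such graphs $q_1,\dots,q_n$, $q_l$ having as many leaves as $v_l$ has half-edges, and a bijection $\bigsqcup_l V(q_l)\to V(q)$ order preserving on each $V(q_l)$, such that $q$ is obtained by substituting $q_l$ into $v_l$: the $i$-th leaf of $q_l$ is identified with the $i$-th half-edge of $v_l$; an edge of $p$ between the $i$-th half-edge of $v_j$ and the $k$-th half-edge of $v_l$ becomes an edge of $q$ between the $i$-th leaf of $q_j$ and the $k$-th leaf of $q_l$; if the $i$-th half-edge of $v_j$ is the $k$-th leaf of $p$ then the $i$-th leaf of $q_j$ is the $k$-th leaf of $q$; half-edge orders come from the $q_l$ and the vertex order of $q$ is transported along the bijection. Composition is iterated substitution. (This is the opposite of $\mathcal{C}(P)$ for $P$ the operad of modular operads, restricted to operations of non-zero arity.) *)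

From mathcomp Require Import all_boot.

Set Implicit Arguments.
Unset Strict Implicit.
Unset Printing Implicit Defensive.

Record Category := {
  cOb : Type;
  cHom : cOb -> cOb -> Type;
  cComp : forall a b c, cHom b c -> cHom a b -> cHom a c;
  cId : forall a, cHom a a;
  cComp_idl : forall a b (f : cHom a b), cComp (cId b) f = f;
  cComp_idr : forall a b (f : cHom a b), cComp f (cId a) = f;
  cComp_assoc : forall a b c d (f : cHom a b) (g : cHom b c) (h : cHom c d),
      cComp h (cComp g f) = cComp (cComp h g) f
}.
Arguments cComp {_ _ _ _} _ _.
Arguments cId {_} _.

(** Category data in which composition and identities are given by their
    graphs: [rIsComp f g h] means  h = g o f,  [rIsId h] means h = id.
    (Used for the target category, whose composition is described
    explicitly below.) *)
Record RelCategory := {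
  rOb : Type;
  rHom : rOb -> rOb -> Type;
  rIsComp : forall a b c, rHom a b -> rHom b c -> rHom a c -> Prop;
  rIsId : forall a, rHom a a -> Prop
}.
Arguments rIsComp {_ _ _ _} _ _ _.
Arguments rIsId {_ _} _.

Record Functor (C : Category) (D : RelCategory) := {
  fobj : cOb C -> rOb D;
  fmap : forall a b, cHom a b -> rHom (fobj a) (fobj b);
  fmap_id : forall a, rIsId (fmap (cId a));
  fmap_comp : forall a b c (f : cHom a b) (g : cHom b c),
      rIsComp (fmap f) (fmap g) (fmap (cComp g f))
}.
Arguments fobj {_ _} _ _.
Arguments fmap {_ _} _ {_ _} _.

Definition admissible_order (C : Category) (c : cOb C)
    (lt : forall c', cHom c c' -> cHom c c' -> Prop) : Prop :=
  (forall c', well_founded (lt c')) /\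
  (forall c' (f g h : cHom c c'), lt c' f g -> lt c' g h -> lt c' f h) /\
  (forall c' (f g : cHom c c'), lt c' f g \/ f = g \/ lt c' g f) /\
  (forall c' c'' (g : cHom c' c'') (f f' : cHom c c'),
      lt c' f f' -> lt c'' (cComp g f) (cComp g f')).

Definition under_le (C : Category) (c : cOb C)
    (f g : {c' : cOb C & cHom c c'}) : Prop :=
  exists h : cHom (projT1 f) (projT1 g), projT2 g = cComp h (projT2 f).

Definition noetherian_under (C : Category) (c : cOb C) : Prop :=
  forall s : nat -> {c' : cOb C & cHom c c'},
    exists i j, (i < j)%N /\ under_le (s i) (s j).

Definition Grobner (C : Category) : Prop :=
  forall c : cOb C,
    (exists lt, @admissible_order C c lt) /\ noetherian_under c.

Definition ess_surj (C : Category) (D : RelCategory) (F : Functor C D) : Prop :=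
  forall d : rOb D, exists (c : cOb C) (f : rHom d (fobj F c)) (g : rHom (fobj F c) d),
    (exists h, rIsComp f g h /\ rIsId h) /\ (exists h, rIsComp g f h /\ rIsId h).

Definition propertyF (C : Category) (D : RelCategory) (F : Functor C D) : Prop :=
  forall d : rOb D,
    exists (n : nat) (cs : nat -> cOb C) (fs : forall i, rHom d (fobj F (cs i))),
      forall (c : cOb C) (f : rHom d (fobj F c)),
        exists i, (i < n)%N /\
          exists g : cHom (cs i) c, rIsComp (fs i) (fmap F g) f.

Definition quasi_Grobner (D : RelCategory) : Prop :=
  exists (C : Category) (F : Functor C D),
    Grobner C /\ ess_surj F /\ propertyF F.

(* Vertices are 0..n-1 (in their order); vertex v has half-edges        *)
(* 0..(arity v)-1 (in their order).  The entry at half-edge (v,i) is    *)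
(*   inl k      : (v,i) is a leaf, namely the k-th leaf, or             *)
(*   inr (w,j)  : (v,i) is paired by the involution with (w,j).         *)
(* Since isomorphisms must preserve all orders, this canonical form     *)
(* represents isomorphism classes bijectively.                          *)

Definition end_t := (nat + nat * nat)%type.
Definition rawgraph := seq (seq end_t).

Definition grow (G : rawgraph) (v : nat) : seq end_t := nth [::] G v.
Definition ent (G : rawgraph) (v i : nat) : end_t := nth (inl 0) (grow G v) i.

Definition leafLabels (G : rawgraph) : seq nat :=
  pmap (fun e : end_t => if e is inl k then Some k else None) (flatten G).
Definition nleaves (G : rawgraph) : nat := size (leafLabels G).

Definition okEnd (G : rawgraph) (v i : nat) : bool :=
  match ent G v i with
  | inl _ => true
  | inr (w, j) => [&& w < size G, j < size (grow G w),
                      ent G w j == inr (v, i) & (w, j) != (v, i)]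
  end.

Definition wf_graph (G : rawgraph) : bool :=
  [&& 0 < size G,
      [forall v : 'I_(size G), forall i : 'I_(size (grow G v)), okEnd G v i]
    & perm_eq (leafLabels G) (iota 0 (nleaves G))].

Definition gadj (G : rawgraph) : rel 'I_(size G) :=
  fun v w => has (fun e : end_t => if e is inr (w', _) then w' == w else false)
                 (grow G v).

Definition gconnected (G : rawgraph) : bool :=
  [forall v : 'I_(size G), forall w : 'I_(size G), connect (@gadj G) v w].

Definition isObj (G : rawgraph) : bool := wf_graph G && gconnected G.
Definition NObj := {G : rawgraph | isObj G}.

(** Substitution.  [sh] lists, for each vertex m of the result, the index
    l of the graph q_l it comes from; the bijection sqcup V(q_l) -> V(q),
    order preserving on each V(q_l), sends the k-th vertex of q_l to
    [occ sh l k], the position of the (k+1)-st occurrence of l in sh. *)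
Fixpoint occ (sh : seq nat) (l k : nat) : nat :=
  match sh with
  | [::] => 0
  | x :: s => if x == l then (if k is k'.+1 then (occ s l k').+1 else 0)
              else (occ s l k).+1
  end.

Definition leafpos (G : rawgraph) (i : nat) : nat * nat :=
  let v := find (fun r : seq end_t => (inl i : end_t) \in r) G in
  (v, index (inl i : end_t) (grow G v)).

Definition tr (p : rawgraph) (qs : seq rawgraph) (sh : seq nat) (l : nat)
    (e : end_t) : end_t :=
  match e with
  | inr (w, j) => inr (occ sh l w, j)
  | inl i =>
      match ent p l i with
      | inl k => inl k
      | inr (l', i') =>
          let wj := leafpos (nth [::] qs l') i' in inr (occ sh l' wj.1, wj.2)
      end
  end.

Definition subst (p : rawgraph) (qs : seq rawgraph) (sh : seq nat) : rawgraph :=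
  [seq let l := nth 0 sh m in
       let k := count_mem l (take m sh) in
       map (tr p qs sh l) (grow (nth [::] qs l) k)
  | m <- iota 0 (size sh)].

Definition mordata := (seq rawgraph * seq nat)%type.

Definition isMor (p q : rawgraph) (m : mordata) : bool :=
  [&& size m.1 == size p,
      all isObj m.1,
      [forall l : 'I_(size p), nleaves (nth [::] m.1 l) == size (grow p l)],
      size m.2 == sumn (map size m.1),
      [forall l : 'I_(size p), count_mem (nat_of_ord l) m.2 == size (nth [::] m.1 l)]
    & q == subst p m.1 m.2].

Definition NHom (p q : NObj) := {m : mordata | isMor (val p) (val q) m}.

(** Composition (iterated substitution) of f = (qs, sh) : p -> q and
    g = (rs, sh') : q -> r. *)
Definition compraw (p : rawgraph) (f g : mordata) : mordata :=
  let qs := f.1 in let sh := f.2 in let rs := g.1 in let sh' := g.2 in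
  ([seq subst (nth [::] qs l)
          [seq nth [::] rs (occ sh l k) | k <- iota 0 (size (nth [::] qs l))]
          [seq count_mem l (take m sh) | m <- sh' & nth 0 sh m == l]
    | l <- iota 0 (size p)],
   [seq nth 0 sh m | m <- sh']).

Definition corolla (a : nat) : rawgraph := [:: [seq (inl i : end_t) | i <- iota 0 a]].

Definition idraw (p : rawgraph) : mordata :=
  ([seq corolla (size (grow p l)) | l <- iota 0 (size p)], iota 0 (size p)).

Definition NumOpOp : RelCategory :=
  {| rOb := NObj;
     rHom := NHom;
     rIsComp := fun a b c (f : NHom a b) (g : NHom b c) (h : NHom a c) =>
                  val h = compraw (val a) (val f) (val g);
     rIsId := fun a (h : NHom a a) => val h = idraw (val a) |}.

From mathcomp Require Import all_boot.
From Stdlib Require Import Classical ClassicalEpsilon.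

(* Morphisms of C(numOp)^op never decrease the number of vertices, keep
   leafless graphs leafless, and, when they keep the number of vertices,
   substitute one-vertex graphs: they then only permute the vertices and add
   loops, so they cannot increase the number of half-edges on non-loop edges.
   Hence a preimage c_k of the dipole with k+1 parallel edges has an image
   with two vertices, no leaves and 2(k+1) non-loop half-edges, and there is
   no morphism c_k -> c_k' for k < k'.  All these images receive a morphism
   from the one-vertex graph with no half-edges, so property (F) and the
   infinite pigeonhole principle put infinitely many c_k under one object of
   a Gröbner category, whose Noetherian coslice yields such a morphism. *)

Set Implicit Arguments.
Unset Strict Implicit.
Unset Printing Implicit Defensive.

Lemma leqif_size_sumn (s : seq nat) :
  all (leq 1) s -> size s <= sumn s ?= iff all (pred1 1) s.
Proof.
elim: s => [|x s IHs] /=; first by move=> _; apply: leqif_refl.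
case/andP=> x_pos /IHs s_le; rewrite -add1n [x == 1]eq_sym.
exact: leqif_add (leqif_eq x_pos) s_le.
Qed.

Lemma sub_in_count (T : eqType) (a1 a2 : pred T) (s : seq T) :
  {in s, forall x, a1 x -> a2 x} -> count a1 s <= count a2 s.
Proof.
elim: s => //= x s IHs sub; rewrite leq_add ?IHs => // [|y s_y]; last first.
  by apply: sub; rewrite inE s_y orbT.
by case a1x: (a1 x); rewrite // sub ?mem_head.
Qed.

Lemma infinite_pigeonhole (P : nat -> nat -> Prop) (n : nat) :
    (forall k, exists2 i, i < n & P i k) ->
  exists2 i, i < n & forall N, exists2 k, N <= k & P i k.
Proof.
elim: n P => [|n IHn] P cover; first by have [] := cover 0.
have [inf_n | /not_all_ex_not [N fin_n]] :=
  classic (forall N, exists2 k, N <= k & P n k); first by exists n.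
have [|i lt_in inf_i] := IHn (fun i k => P i (N + k)).
  move=> k; have [i] := cover (N + k); rewrite ltnS leq_eqVlt.
  case/predU1P=> [-> Pn | lt_in Pi]; last by exists i.
  by case: fin_n; exists (N + k); rewrite ?leq_addr.
exists i => [|M]; first exact: ltnW.
by have [k le_Mk Pk] := inf_i M; exists (N + k); first exact: leq_trans le_Mk (leq_addl N k).
Qed.

Lemma unbounded_subseq (P : nat -> Prop) :
    (forall N, exists2 k, N <= k & P k) ->
  exists phi : nat -> nat, {homo phi : j j' / j < j'} /\ forall j, P (phi j).
Proof.
move=> unbounded.
have [next next_spec] : exists next : nat -> nat, forall N, N <= next N /\ P (next N).
  apply: (ClassicalEpsilon.choice (fun N k => N <= k /\ P k)) => N.
  by have [k] := unbounded N; exists k.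
exists (fun j => iter j (fun k => next k.+1) (next 0)); split.
  apply: homo_ltn; first exact: ltn_trans.
  by move=> j; apply: (next_spec _).1.
by case=> [|j]; apply: (next_spec _).2.
Qed.

Section QuasiGrobner.
Variables (C : Category) (D : RelCategory) (F : Functor C D).

Lemma ess_surj_section :
    ess_surj F ->
  exists c : rOb D -> cOb C, forall d,
    inhabited (rHom d (fobj F (c d))) /\ inhabited (rHom (fobj F (c d)) d).
Proof.
move=> esF; apply: (ClassicalEpsilon.choice (fun d c =>
  inhabited (rHom d (fobj F c)) /\ inhabited (rHom (fobj F c) d))) => d.
by have [c [f [g _]]] := esF d; exists c; split; constructor.
Qed.

Hypothesis noetherianC : forall c : cOb C, noetherian_under c.
Hypothesis propF : propertyF F.

Lemma propertyF_good_pair (d : rOb D) (c : nat -> cOb C) :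
    (forall k, rHom d (fobj F (c k))) ->
  exists k k', k < k' /\ inhabited (cHom (c k) (c k')).
Proof.
move=> f; have [n [cs [fs factor]]] := propF d.
have cover k : exists2 i, i < n & inhabited (cHom (cs i) (c k)).
  by have [i [lt_in [g _]]] := factor _ (f k); exists i => //; constructor.
have [i _ /unbounded_subseq [phi [phi_incr phi_hom]]] := infinite_pigeonhole cover.
pose g j := epsilon (phi_hom j) (fun _ => True).
have [j [j' [lt_jj' [h _]]]] := noetherianC (fun j => existT _ (c (phi j)) (g j)).
by exists (phi j), (phi j'); split; [apply: phi_incr | constructor].
Qed.

End QuasiGrobner.

Lemma count_pmap (aT rT : Type) (f : aT -> option rT) (a : pred rT) (s : seq aT) :
  count a (pmap f s) = count (fun x => oapp a false (f x)) s.
Proof. by elim: s => //= x s IHs; case: (f x) => //= y; rewrite IHs. Qed.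

Lemma mem_leafLabels (G : rawgraph) (i : nat) :
  (i \in leafLabels G) = ((inl i : end_t) \in flatten G).
Proof. by apply: (can2_mem_pmap (g := inl)) => -[]. Qed.

Lemma mem_row_flatten (G : rawgraph) (v : nat) (e : end_t) :
  e \in grow G v -> e \in flatten G.
Proof.
case: (ltnP v (size G)) => [lt_v|ge_v]; last by rewrite /grow nth_default.
by move=> G_e; apply/flattenP; exists (grow G v); rewrite ?mem_nth.
Qed.

Lemma leaflessP (G : rawgraph) :
  reflect (forall i, (inl i : end_t) \notin flatten G) (nleaves G == 0).
Proof.
rewrite /nleaves size_eq0; apply: (iffP eqP) => [G0 i | none].
  by rewrite -mem_leafLabels G0.
case E: (leafLabels G) => [//|i s]; have := none i.
by rewrite -mem_leafLabels E mem_head.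
Qed.

Section Objects.
Variable G : rawgraph.
Hypothesis G_obj : isObj G.

Lemma obj_size_gt0 : 0 < size G.
Proof. by case/andP: G_obj => /and3P[]. Qed.

Lemma obj_leafLabels : perm_eq (leafLabels G) (iota 0 (nleaves G)).
Proof. by case/andP: G_obj => /and3P[]. Qed.

Lemma obj_leaf_lt (i : nat) : i \in leafLabels G -> i < nleaves G.
Proof. by rewrite (perm_mem obj_leafLabels) mem_iota => /andP[]. Qed.

Lemma obj_okEnd (v i : nat) : v < size G -> i < size (grow G v) -> okEnd G v i.
Proof.
case/andP: G_obj => /and3P[_ /forallP okG _ _] lt_v lt_i.
exact: (forallP (okG (Ordinal lt_v)) (Ordinal lt_i)).
Qed.

Lemma obj_edge_lt (v w j : nat) : inr (w, j) \in grow G v -> w < size G.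
Proof.
case: (ltnP v (size G)) => [lt_v|ge_v]; last by rewrite /grow nth_default.
case/(nthP (inl 0)) => i lt_i Gvi.
by have := obj_okEnd lt_v lt_i; rewrite /okEnd /ent Gvi => /andP[].
Qed.

Lemma obj_leafpos_lt (i : nat) : i < nleaves G -> (leafpos G i).1 < size G.
Proof.
move=> lt_i; have: i \in leafLabels G by rewrite (perm_mem obj_leafLabels) mem_iota.
rewrite mem_leafLabels => /flattenP[r G_r r_i].
by rewrite -has_find; apply/hasP; exists r.
Qed.

Lemma count_leaves (a : pred nat) :
  count (fun e : end_t => if e is inl i then a i else false) (flatten G) =
  count a (iota 0 (nleaves G)).
Proof. by rewrite -(permP obj_leafLabels) count_pmap; apply: eq_count => -[]. Qed.

End Objects.

Definition is_nonloop (v : nat) (e : end_t) : bool :=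
  if e is inr (w, _) then w != v else false.

Definition nonloops_at (G : rawgraph) (v : nat) : nat := count (is_nonloop v) (grow G v).

Definition nonloops (G : rawgraph) : nat := \sum_(v < size G) nonloops_at G v.

Lemma size_subst (p : rawgraph) (qs : seq rawgraph) (sh : seq nat) :
  size (subst p qs sh) = size sh.
Proof. by rewrite size_map size_iota. Qed.

Lemma grow_subst (p : rawgraph) (qs : seq rawgraph) (sh : seq nat) (v : nat) :
    v < size sh ->
  let l := nth 0 sh v in
  grow (subst p qs sh) v = map (tr p qs sh l) (grow (nth [::] qs l) (count_mem l (take v sh))).
Proof. by move=> lt_v; rewrite /grow /subst (nth_map 0) ?size_iota ?nth_iota. Qed.

Lemma occ_index (sh : seq nat) (l : nat) : occ sh l 0 = index l sh.
Proof. by elim: sh => //= x sh IHsh; rewrite IHsh; case: eqP. Qed.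

Lemma flatten_single (G : rawgraph) : size G = 1 -> flatten G = grow G 0.
Proof. by case: G => [|r []] //= _; rewrite cats0. Qed.

Section Morphisms.
Variables (p q : rawgraph) (m : mordata).
Hypothesis mor : isMor p q m.
Local Notation qs := m.1.
Local Notation sh := m.2.

Let size_qs : size qs = size p.
Proof. by case/and5P: mor => /eqP. Qed.

Let qs_obj (l : nat) : l < size p -> isObj (nth [::] qs l).
Proof. by case/and5P: mor => _ /allP qs_obj _ _ _ lt_l; rewrite qs_obj ?mem_nth ?size_qs. Qed.

Let nleaves_qs (l : nat) : l < size p -> nleaves (nth [::] qs l) = size (grow p l).
Proof. by case/and5P: mor => _ _ /forallP arity _ _ lt_l; apply/eqP: (arity (Ordinal lt_l)). Qed.

Let size_sh : size sh = sumn (map size qs).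
Proof. by case/and5P: mor => _ _ _ /eqP. Qed.

Let count_sh (l : nat) : l < size p -> count_mem l sh = size (nth [::] qs l).
Proof. by case/and5P: mor => _ _ _ _ /andP[/forallP nsh _] lt_l; apply/eqP: (nsh (Ordinal lt_l)). Qed.

Let q_subst : q = subst p qs sh.
Proof. by case/and5P: mor => _ _ _ _ /andP[_ /eqP]. Qed.

Let qs_size_gt0 : all (leq 1) (map size qs).
Proof.
by rewrite all_map; apply/(all_nthP [::]) => l; rewrite size_qs => /qs_obj/obj_size_gt0.
Qed.

Lemma mor_size_le : size p <= size q.
Proof.
by rewrite q_subst size_subst size_sh -size_qs -(size_map size) (leqif_size_sumn _).1.
Qed.

Lemma mor_leafless : nleaves p = 0 -> nleaves q = 0.
Proof.
move=> /eqP/leaflessP p_leafless; apply/eqP/leaflessP => i.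
rewrite q_subst; apply/flattenP => -[_ /mapP[v _ ->] /mapP[e]].
set l := nth 0 sh v; set Q := nth [::] qs l => Q_e.
have [lt_l|ge_l] := ltnP l (size p); last first.
  by move: Q_e; rewrite /Q nth_default ?size_qs // /grow nth_nil.
case: e Q_e => [i' | [w j]] Q_e //=.
have lt_i' : i' < size (grow p l).
  by rewrite -nleaves_qs // obj_leaf_lt ?qs_obj // mem_leafLabels (mem_row_flatten Q_e).
case E: (ent p l i') => [k|[l' i'']] // _.
by have := p_leafless k; rewrite -E (mem_row_flatten (mem_nth _ lt_i')).
Qed.

Section SameSize.
Hypothesis p_obj : isObj p.
Hypothesis size_q : size q = size p.

Let size_sh_eq : size sh = size p.
Proof. by rewrite -size_q q_subst size_subst. Qed.

Let qs_single (l : nat) : l < size p -> size (nth [::] qs l) = 1.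
Proof.
move=> lt_l; have /all_nthP all1 : all (pred1 1) (map size qs).
  by rewrite -(leqif_size_sumn qs_size_gt0).2 size_map size_qs -size_sh size_sh_eq.
by apply/eqP; rewrite -(nth_map [::] 0) ?size_qs //; apply: all1; rewrite size_map size_qs.
Qed.

Let sh_perm : perm_eq sh (iota 0 (size p)).
Proof.
have sub_sh : {subset iota 0 (size p) <= sh}.
  by move=> l; rewrite mem_iota => /andP[_ lt_l]; rewrite -has_pred1 has_count count_sh ?qs_single.
have le_size : size sh <= size (iota 0 (size p)) by rewrite size_iota size_sh_eq.
have iota_uniq_p := iota_uniq 0 (size p).
rewrite perm_sym uniq_perm ?(leq_size_uniq iota_uniq_p sub_sh le_size) //.
exact: (uniq_min_size iota_uniq_p sub_sh le_size).2.
Qed.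

Lemma mor_nonloops_at_le (v : nat) :
  v < size p -> nonloops_at q v <= nonloops_at p (nth 0 sh v).
Proof.
move=> lt_v; set l := nth 0 sh v; set Q := nth [::] qs l.
have sh_uniq : uniq sh by rewrite (perm_uniq sh_perm) iota_uniq.
have sh_l : l \in sh by rewrite mem_nth ?size_sh_eq.
have lt_l : l < size p by move: sh_l; rewrite (perm_mem sh_perm) mem_iota => /andP[].
have Q_obj := qs_obj lt_l; have Q1 := qs_single lt_l.
have occ_l : occ sh l 0 = v by rewrite occ_index index_uniq ?size_sh_eq.
have first_l : count_mem l (take v sh) = 0.
  by apply/count_memPn; rewrite in_take // -occ_index occ_l ltnn.
rewrite /nonloops_at q_subst grow_subst ?size_sh_eq // -/l first_l -/Q count_map.
(* An edge of the one-vertex graph Q becomes a loop at v, and a leaf of Q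
   glued to a half-edge of p lies on a non-loop edge only if that one did. *)
apply: (@leq_trans (count (fun e : end_t =>
    if e is inl i then is_nonloop l (ent p l i) else false) (grow Q 0))).
  apply: sub_in_count => -[i|[w j]] Q_e /=; last first.
    by have := obj_edge_lt Q_obj Q_e; rewrite Q1 ltnS leqn0 => /eqP->; rewrite occ_l eqxx.
  have lt_i : i < size (grow p l).
    by rewrite -nleaves_qs // obj_leaf_lt // mem_leafLabels (mem_row_flatten Q_e).
  rewrite /tr; case E: (ent p l i) => [k|[l' i']] //=.
  have := obj_okEnd p_obj lt_l lt_i; rewrite /okEnd E => /and4P[_ lt_i' _ _].
  have [El' | //] := eqVneq l' l; rewrite El' in lt_i' *.
  have := @obj_leafpos_lt _ Q_obj i'; rewrite nleaves_qs // Q1 ltnS leqn0 => /(_ lt_i')/eqP.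
  by rewrite /leafpos /= => ->; rewrite occ_l eqxx.
rewrite -flatten_single // count_leaves // nleaves_qs //.
by rewrite -{2}(mkseq_nth (inl 0) (grow p l)) /mkseq count_map.
Qed.

Lemma mor_nonloops_le : nonloops q <= nonloops p.
Proof.
rewrite /nonloops size_q.
apply: (@leq_trans (\sum_(v < size p) nonloops_at p (nth 0 sh v))).
  by apply: leq_sum => v _; apply: mor_nonloops_at_le.
have -> : \sum_(v < size p) nonloops_at p (nth 0 sh v) = \sum_(l <- sh) nonloops_at p l.
  by rewrite (big_nth 0) size_sh_eq big_mkord.
by rewrite (perm_big _ sh_perm) -(big_mkord xpredT) /index_iota subn0.
Qed.

End SameSize.
End Morphisms.

Definition dipole (a : nat) : rawgraph :=
  [:: [seq (inr (1, i) : end_t) | i <- iota 0 a]; [seq (inr (0, i) : end_t) | i <- iota 0 a]].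

Lemma size_grow_dipole (a v : nat) : v < 2 -> size (grow (dipole a) v) = a.
Proof. by case: v => [|[|]] // _; rewrite size_map size_iota. Qed.

Lemma ent_dipole (a v i : nat) : v < 2 -> i < a -> ent (dipole a) v i = inr (1 - v, i).
Proof. by case: v => [|[|]] // _ lt_i; rewrite /ent /grow /= (nth_map 0) ?size_iota ?nth_iota. Qed.

Lemma nleaves_dipole (a : nat) : nleaves (dipole a) = 0.
Proof.
by apply/eqP/leaflessP => i; rewrite /= cats0 mem_cat; apply/norP; split; apply/mapP => -[].
Qed.

Lemma nonloops_dipole (a : nat) : nonloops (dipole a) = a.*2.
Proof.
rewrite /nonloops big_ord_recl big_ord1 /nonloops_at /= !count_map -addnn.
by congr (_ + _); rewrite (@eq_count _ _ predT) ?count_predT ?size_iota.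
Qed.

Lemma dipole_obj (a : nat) : isObj (dipole a.+1).
Proof.
apply/andP; split.
  apply/and3P; split => //.
  - apply/forallP => -[v lt_v]; apply/forallP => -[i]; rewrite /= size_grow_dipole // => lt_i.
    rewrite /okEnd ent_dipole //.
    by case: v lt_v => [|[|]] // _; rewrite size_grow_dipole ?ent_dipole //= lt_i andbT; apply/eqP.
  - by have /size0nil E := nleaves_dipole a.+1; rewrite /nleaves E.
apply/forallP => v; apply/forallP => w; have [-> | neq_vw] := eqVneq v w; first exact: connect0.
apply: connect1; apply/hasP; exists (inr (val w, 0)); last by rewrite /= eqxx.
by move: v w neq_vw => [[|[|//]] ?] [[|[|//]] ?] //= _; rewrite mem_head.
Qed.

Definition point : rawgraph := [:: [::]].

Lemma point_obj : isObj point.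
Proof.
apply/andP; split; first by apply/and3P; split => //; apply/forallP => -[[|//] ?]; apply/forallP => -[].
by apply/forallP => v; apply/forallP => w; rewrite !ord1; apply: connect0.
Qed.

Lemma occ_nseq (N l w : nat) : w < N -> occ (nseq N l) l w = w.
Proof. by elim: N w => [|N IHN] [|w] //= lt_w; rewrite eqxx ?IHN. Qed.

Lemma point_mor (y : rawgraph) :
  isObj y -> nleaves y = 0 -> isMor point y ([:: y], nseq (size y) 0).
Proof.
move=> y_obj nleaves_y; apply/and5P; split=> [//||||].
- by rewrite /= y_obj.
- by apply/forallP => l; rewrite ord1 /= nleaves_y.
- by rewrite /= size_nseq addn0.
apply/andP; split; first by apply/forallP => l; rewrite ord1 /= count_nseq mul1n.
apply/eqP; rewrite /subst /= size_nseq -{1}(mkseq_nth [::] y).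
apply/eq_in_map => v; rewrite mem_iota => /andP[_ lt_v].
rewrite nth_nseq lt_v take_nseq; last exact: ltnW.
rewrite count_nseq mul1n [nth [::] [:: y] 0]/= -/(grow y v) -{1}(map_id (grow y v)).
apply/eq_in_map => -[i|[w j]] y_e.
  by move/eqP/leaflessP/(_ i): nleaves_y; rewrite (mem_row_flatten y_e).
by rewrite /= occ_nseq // (obj_edge_lt y_obj y_e).
Qed.

Definition dipoleObj (a : nat) : NObj := exist _ (dipole a.+1) (dipole_obj a).

Definition pointObj : NObj := exist _ point point_obj.

Lemma hom_dipole_equiv (a : nat) (y : NObj) :
    inhabited (NHom (dipoleObj a) y) /\ inhabited (NHom y (dipoleObj a)) ->
  [/\ size (val y) = 2, nonloops (val y) = a.+1.*2 & nleaves (val y) = 0].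
Proof.
move=> [[[f mor_f]] [[g mor_g]]].
have size_y : size (val y) = 2.
  by apply/eqP; rewrite eqn_leq (mor_size_le mor_g) (mor_size_le mor_f).
split=> //; last exact: mor_leafless mor_f (nleaves_dipole a.+1).
apply/eqP; rewrite eqn_leq -nonloops_dipole.
rewrite (mor_nonloops_le mor_f (dipole_obj a) size_y).
exact: mor_nonloops_le mor_g (valP y) (esym size_y).
Qed.

Theorem proposition3p12 : ~ quasi_Grobner NumOpOp.
Proof.
move=> [C [F [grobC [/ess_surj_section[c equiv_c] propF]]]].
pose ck k := c (dipoleObj k).
have Fc k := hom_dipole_equiv (equiv_c (dipoleObj k)).
have leafless k : nleaves (val (fobj F (ck k))) = 0 by case: (Fc k).
pose from_point k : NHom pointObj (fobj F (ck k)) :=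
  exist (isMor point _) _ (point_mor (valP _) (leafless k)).
have [k [k' [lt_kk' [h]]]] := propertyF_good_pair (fun c => (grobC c).2) propF from_point.
have [size_k nonloops_k _] := Fc k; have [size_k' nonloops_k' _] := Fc k'.
have := mor_nonloops_le (valP (fmap F h)) (valP _) (etrans size_k' (esym size_k)).
by rewrite nonloops_k nonloops_k' leq_double ltnS leqNgt lt_kk'.
Qed.
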